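(* (Quotient rule.) Let $n\in\mathbb{N}$ (with $0\in\mathbb{N}$) and let $u$ and $v$ be $n$ times differentiable functions of $x$. At every point where $v\neq 0$, \[ \frac{d^n}{dx^n}\left(\frac{u}{v}\right)=n!\sum_{\ell=0}^{n}\frac{u^{(n-\ell)}}{(n-\ell)!}\sum_{\sum_i i y_{k,i}=\ell}\binom{\sum_i y_{k,i}}{y_{k,1},\ldots,y_{k,\ell}}\frac{(-1)^{\sum_i y_{k,i}}}{v^{\sum_i y_{k,i}+1}}\prod_{i=1}^{\ell}\left[\frac{v^{(i)}}{i!}\right]^{y_{k,i}}. \]
   Context: For each $\ell$, the inner sum runs over all partitions of $\ell$, each represented as a tuple $(y_{k,1},\ldots,y_{k,\ell})$ of non-negative integers with $\sum_{i=1}^{\ell} i\,y_{k,i}=\ell$; sums $\sum_i$ run over $i=1,\ldots,\ell$. For $\ell=0$ the only partition is the zero partition and the inner sum equals $1/v$. $f^{(i)}$ denotes the $i$-th derivative with respect to $x$, and $\binom{N}{a_1,\ldots,a_m}=\frac{N!}{a_1!\cdots a_m!}$ is the multinomial coefficient. *)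

From mathcomp Require Import all_boot all_order all_algebra.
From mathcomp Require Import all_classical all_reals all_analysis.
Set Implicit Arguments. Unset Strict Implicit. Unset Printing Implicit Defensive.
Import Order.TTheory GRing.Theory Num.Theory.
Local Open Scope ring_scope.

(* Partitions of l, encoded as tuples (y_1,...,y_l) (y_(i+1) stored at index i : 'I_l)
   of naturals with sum_i i * y_i = l.  Each y_i <= l, so values in 'I_l.+1 lose nothing. *)
Definition partitions_of (l : nat) : {set {ffun 'I_l -> 'I_l.+1}} :=
  [set y : {ffun 'I_l -> 'I_l.+1} | (\sum_(i < l) i.+1 * y i)%N == l].

Definition multinom (R : fieldType) (N m : nat) (a : 'I_m -> nat) : R :=
  (N`!)%:R / (\prod_(i < m) (a i)`!)%:R.

(* Write u = q v with q = u / v, on the open set where v does not vanish.  Leibniz's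
   rule, divided by m!, says that the Taylor coefficients D, A, B of q, v, u at x satisfy
   D A = B as power series truncated at order n; hence D = B A^-1.  Since A = a_0 + P with
   P(0) = 0, A^-1 = sum_K (-1)^K P^K / a_0^(K+1), and by the multinomial theorem the
   coefficient of X^l in P^K is the sum, over the partitions of l into K parts, of the
   multinomial coefficient times prod_i a_i^(y_i): this is the inner sum of the formula. *)

From mathcomp Require Import all_boot all_order all_algebra.
From mathcomp Require Import all_classical all_reals all_analysis.
From mathcomp Require Import ring zify.
Import Order.TTheory GRing.Theory Num.Theory.
Import numFieldNormedType.Exports.
Local Open Scope ring_scope.

Set Implicit Arguments. Unset Strict Implicit. Unset Printing Implicit Defensive.

Section FfunCons.
Variables (T : Type) (m : nat).

Definition ffun_cons (t : T) (y : {ffun 'I_m -> T}) : {ffun 'I_m.+1 -> T} :=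
  [ffun i => if unlift ord0 i is Some j then y j else t].

Lemma ffun_cons0 t y : ffun_cons t y ord0 = t.
Proof. by rewrite ffunE unlift_none. Qed.

Lemma ffun_cons_lift t y j : ffun_cons t y (lift ord0 j) = y j.
Proof. by rewrite ffunE liftK. Qed.

End FfunCons.

Lemma sum_ffunS (V : nmodType) (T : finType) m (F : {ffun 'I_m.+1 -> T} -> V) :
  \sum_(y : {ffun 'I_m.+1 -> T}) F y =
  \sum_(t : T) \sum_(y : {ffun 'I_m -> T}) F (ffun_cons t y).
Proof.
rewrite pair_big /= (reindex (fun p => ffun_cons p.1 p.2)) //.
exists (fun y : {ffun 'I_m.+1 -> T} => (y ord0, [ffun j => y (lift ord0 j)])).
  move=> [t y] _ /=; rewrite ffun_cons0; congr pair.
  by apply/ffunP => j; rewrite ffunE ffun_cons_lift.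
move=> y _ /=; apply/ffunP => i; rewrite ffunE.
by case: unliftP => [j ->|->]; rewrite ?ffunE.
Qed.

Lemma natr_fact_neq0 (R : numDomainType) n : (n`!)%:R != 0 :> R.
Proof. by rewrite pnatr_eq0 -lt0n fact_gt0. Qed.

Lemma multinom_ffun_cons (R : numFieldType) B m K (t : 'I_B) (y : {ffun 'I_m -> 'I_B}) :
  (t <= K)%N ->
  multinom R K (fun i => (ffun_cons t y i : nat)) =
  'C(K, t)%:R * multinom R (K - t) (fun i => (y i : nat)).
Proof.
move=> tK; rewrite /multinom big_ord_recl ffun_cons0.
under eq_bigr do rewrite ffun_cons_lift.
rewrite -(bin_fact tK) !natrM.
have y_neq0 : (\prod_(i < m) (y i)`!)%:R != 0 :> R.
  by rewrite pnatr_eq0 -lt0n prodn_gt0 // => i; rewrite fact_gt0.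
by field; rewrite natr_fact_neq0 y_neq0.
Qed.

(* Exponent vectors are taken in 'I_B, as in [partitions_of]; K < B loses none. *)
Lemma expr_sum_multinom (R : numFieldType) (A : comAlgType R) B m K (z : 'I_m -> A) :
  (K < B)%N ->
  (\sum_(i < m) z i) ^+ K =
  \sum_(y : {ffun 'I_m -> 'I_B} | (\sum_(i < m) (y i : nat))%N == K)
     multinom R K (fun i => (y i : nat)) *: \prod_(i < m) z i ^+ y i.
Proof.
elim: m z K => [|m IHm] z K KB.
  rewrite big_ord0; case: K KB => [|K] KB; last first.
    by rewrite expr0n big_pred0 // => y; rewrite big_ord0.
  rewrite (big_pred1 [ffun=> Ordinal KB]); last first.
    by move=> y; rewrite big_ord0 eqxx; symmetry; apply/eqP/ffunP => -[].
  by rewrite /multinom !big_ord0 divr1 scale1r.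
rewrite big_ord_recl addrC exprDn [RHS]big_mkcond [RHS]sum_ffunS /=.
rewrite (big_ord_widen _ (fun t => (\sum_(i < m) z (lift ord0 i)) ^+ (K - t) *
  z ord0 ^+ t *+ 'C(K, t)) KB) big_mkcond; apply: eq_bigr => t _.
case: ifP => [|Kt]; last first.
  rewrite big1 // => y _; rewrite big_ord_recl ffun_cons0.
  by case: eqP => // sum_y; move: Kt; rewrite -sum_y ltnS leq_addr.
rewrite ltnS => tK; rewrite (IHm _ (K - t)%N); last exact: leq_ltn_trans (leq_subr _ _) KB.
rewrite mulr_suml -sumrMnl big_mkcond; apply: eq_bigr => y _.
rewrite big_ord_recl ffun_cons0.
under [X in (_ + X)%N]eq_bigr do rewrite ffun_cons_lift.
have -> : ((t + \sum_(i < m) (y i : nat)) == K)%N = ((\sum_(i < m) (y i : nat)) == K - t)%N.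
  by apply/eqP/eqP => [<-|->]; [rewrite addKn | rewrite subnKC].
case: ifP => // _; rewrite multinom_ffun_cons // big_ord_recl ffun_cons0.
under [X in _ *: (_ * X)]eq_bigr do rewrite ffun_cons_lift.
by rewrite -scalerAl -scaler_nat scalerA [_ * z ord0 ^+ t]mulrC.
Qed.

Lemma coef_expr_lt (R : nzRingType) (p : {poly R}) K i :
  p`_0 = 0 -> (i < K)%N -> (p ^+ K)`_i = 0.
Proof.
move=> p0; elim: K i => [|K IHK] i iK //.
rewrite exprS coefM big1 // => -[[|j] ji] _ /=; first by rewrite p0 mul0r.
by rewrite IHK ?mulr0 //; lia.
Qed.

Lemma eq_coef_expr (R : nzRingType) (p q : {poly R}) j :
  (forall k, (k <= j)%N -> p`_k = q`_k) ->
  forall K i, (i <= j)%N -> (p ^+ K)`_i = (q ^+ K)`_i.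
Proof.
move=> pq; elim=> [|K IHK] i ij; first by rewrite !expr0.
rewrite !exprS !coefM; apply: eq_bigr => k _.
by rewrite pq ?IHK //; have := ltn_ord k; lia.
Qed.

Lemma conv_inverse_solve (R : comNzRingType) (a b c d : nat -> R) n :
  (forall m, (m <= n)%N -> \sum_(j < m.+1) d j * a (m - j)%N = b m) ->
  (forall m, (m <= n)%N -> \sum_(j < m.+1) c j * a (m - j)%N = (m == 0)%:R) ->
  d n = \sum_(l < n.+1) b (n - l)%N * c l.
Proof.
(* Modulo X^n.+1 we have C A = 1 and D A = B, so D = D (C A) = C (D A) = C B. *)
move=> da ca.
pose trunc (e : nat -> R) := \poly_(i < n.+1) e i.
have coef_trunc e m : (m <= n)%N -> (trunc e)`_m = e m.
  by move=> mn; rewrite coef_poly ltnS mn.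
have coef_conv e m : (m <= n)%N ->
    (trunc e * trunc a)`_m = \sum_(j < m.+1) e j * a (m - j)%N.
  move=> mn; rewrite coefM; apply: eq_bigr => j _.
  have jm : (j <= m)%N := ltn_ord j.
  by rewrite !coef_trunc //; lia.
have -> : d n = (trunc d * (trunc c * trunc a))`_n.
  rewrite coefM big_ord_recr /= subnn coef_conv // ca // mulr1 coef_trunc //.
  rewrite big1 ?add0r // => j _.
  by rewrite coef_conv ?leq_subr // ca ?leq_subr // subn_eq0 leqNgt ltn_ord mulr0.
rewrite mulrCA coefM; apply: eq_bigr => l _.
by rewrite (coef_trunc c _ (ltn_ord l)) coef_conv ?leq_subr // da ?leq_subr // mulrC.
Qed.

Lemma partition_size_lt l (y : {ffun 'I_l -> 'I_l.+1}) :
  y \in partitions_of l -> (\sum_(i < l) (y i : nat) < l.+1)%N.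
Proof.
rewrite inE ltnS => /eqP y_l; rewrite [X in (_ <= X)%N](esym y_l).
apply: leq_sum => i _; exact: leq_pmull.
Qed.

Section ReciprocalSeries.
Variables (R : numFieldType) (a : nat -> R).

Definition tailp l : {poly R} := \sum_(i < l) a i.+1 *: 'X^(i.+1).

Lemma coef_tailp l k : (tailp l)`_k = if (0 < k <= l)%N then a k else 0.
Proof.
rewrite /tailp coef_sum; under eq_bigr do rewrite coefZ coefXn.
case: k => [|k] /=; first by rewrite big1 // => i _; rewrite mulr0.
have [kl|lk] := ltnP k l.
  rewrite (bigD1 (Ordinal kl)) //= eqxx mulr1 big1 ?addr0 // => i.
  by rewrite -val_eqE eqSS => /= ik; rewrite eq_sym (negbTE ik) mulr0.
rewrite big1 // => i _; rewrite eqSS; case: eqP => [ik|]; rewrite ?mulr0 //.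
by have := ltn_ord i; lia.
Qed.

Lemma coef_tailp_expr l K : (K <= l)%N ->
  (tailp l ^+ K)`_l =
  \sum_(y in partitions_of l | (\sum_(i < l) (y i : nat))%N == K)
     multinom R K (fun i => (y i : nat)) * \prod_(i < l) a i.+1 ^+ y i.
Proof.
move=> Kl; rewrite /tailp (expr_sum_multinom _ (B := l.+1)) // coef_sum.
rewrite big_mkcond [RHS]big_mkcond; apply: eq_bigr => y _.
rewrite inE andbC; case: ifP => // _.
under eq_bigr do rewrite exprZn -exprM.
rewrite scaler_prod prodrXr !coefZ coefXn eq_sym.
by case: (_ == l); rewrite ?mulr1 ?mulr0.
Qed.

Definition recip_coef (w : R) l : R :=
  \sum_(y in partitions_of l)
     (multinom R (\sum_(i < l) (y i : nat))%N (fun i => (y i : nat)) *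
      (-1) ^+ (\sum_(i < l) (y i : nat))%N
      / w ^+ (\sum_(i < l) (y i : nat)).+1 *
      \prod_(i < l) a i.+1 ^+ (y i : nat)).

Definition recip_poly (w : R) N : {poly R} :=
  \sum_(K < N.+1) ((-1) ^+ K / w ^+ K.+1) *: tailp N ^+ K.

Lemma recip_coefE w l : recip_coef w l = (recip_poly w l)`_l.
Proof.
rewrite /recip_poly coef_sum.
under [RHS]eq_bigr => K _.
  rewrite coefZ (@coef_tailp_expr l K (ltn_ord K)) big_distrr big_mkcondr /=.
over.
rewrite exchange_big /=; apply: eq_bigr => y yP.
rewrite -big_mkcond (big_pred1 (Ordinal (partition_size_lt yP))) => [|K].
  by rewrite /=; ring.
by rewrite /= -val_eqE /= eq_sym.
Qed.

Lemma coef_recip_poly_stable w l N : (l <= N)%N ->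
  (recip_poly w N)`_l = (recip_poly w l)`_l.
Proof.
move=> lN; rewrite /recip_poly !coef_sum.
have lN1 : (l.+1 <= N.+1)%N by [].
rewrite (big_ord_widen N.+1 (fun K => (((-1) ^+ K / w ^+ K.+1) *: tailp l ^+ K)`_l) lN1).
rewrite [RHS]big_mkcond; apply: eq_bigr => K _; rewrite !coefZ.
rewrite (@eq_coef_expr _ _ (tailp l) l) //; last first.
  by move=> k kl; rewrite !coef_tailp (leq_trans kl lN) kl.
case: ifP => // /negbT; rewrite -leqNgt => lK.
by rewrite coef_expr_lt ?mulr0 // coef_tailp.
Qed.

Lemma recip_polyM w N : w != 0 ->
  recip_poly w N * (w%:P + tailp N) = 1 - (- w^-1 *: tailp N) ^+ N.+1.
Proof.
move=> w_neq0; set Z := - w^-1 *: tailp N.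
have -> : recip_poly w N = w^-1 *: \sum_(K < N.+1) Z ^+ K.
  rewrite /recip_poly scaler_sumr; apply: eq_bigr => K _.
  rewrite /Z exprZn scalerA; congr (_ *: _).
  by rewrite [in RHS]exprNn exprVn exprS invfM; ring.
have -> : w%:P + tailp N = w *: (1 - Z).
  by rewrite scalerBr /Z scalerA mulrN divff // scaleN1r opprK -alg_polyC.
rewrite -scalerAl -scalerAr scalerA mulVf // scale1r.
by rewrite -[1 - Z ^+ _]opprB subrX1 -mulNr opprB mulrC.
Qed.

Lemma recip_coef_conv l : a 0 != 0 ->
  \sum_(j < l.+1) recip_coef (a 0) j * a (l - j)%N = (l == 0)%:R.
Proof.
move=> a0_neq0.
have : (recip_poly (a 0) l * ((a 0)%:P + tailp l))`_l = (l == 0)%:R.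
  rewrite recip_polyM // coefB coef1 coef_expr_lt ?subr0 //.
  by rewrite coefZ coef_tailp mulr0.
rewrite coefM => <-; apply: eq_bigr => j _.
rewrite recip_coefE -(@coef_recip_poly_stable _ j l (ltn_ord j)) coefD coefC coef_tailp.
by case: (l - j)%N (leq_subr j l) => [|k] kl /=; rewrite ?addr0 ?add0r ?kl.
Qed.

End ReciprocalSeries.

Lemma binomial_conv_pascal (R : comNzSemiRingType) (F G : nat -> R) m :
  \sum_(j < m.+1) 'C(m, j)%:R * (F j * G (m - j).+1 + G (m - j)%N * F j.+1) =
  \sum_(j < m.+2) 'C(m.+1, j)%:R * (F j * G (m.+1 - j)%N).
Proof.
rewrite [RHS]big_ord_recl /=.
under [X in _ = _ + X]eq_bigr do rewrite subSS binS natrD mulrDl.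
rewrite big_split /= addrA.
under eq_bigr do rewrite mulrDr.
rewrite big_split /=; congr (_ + _); last first.
  by apply: eq_bigr => j _; rewrite [G _ * _]mulrC.
rewrite big_ord_recl [in RHS]big_ord_recr /= !bin0 !subn0 (bin_small (ltnSn m)) mul0r addr0.
congr (_ + _); apply: eq_bigr => j _.
by rewrite /bump /= add1n subnSK.
Qed.

Lemma binomial_conv_taylor (R : numFieldType) (f g : nat -> R) m :
  (\sum_(j < m.+1) 'C(m, j)%:R * (f j * g (m - j)%N)) / (m`!)%:R =
  \sum_(j < m.+1) f j / (j`!)%:R * (g (m - j)%N / ((m - j)`!)%:R).
Proof.
rewrite mulr_suml; apply: eq_bigr => j _.
have jm : (j <= m)%N := ltn_ord j.
have bin_neq0 : 'C(m, j)%:R != 0 :> R by rewrite pnatr_eq0 -lt0n bin_gt0.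
rewrite -(bin_fact jm) !natrM; field.
by rewrite bin_neq0 !natr_fact_neq0.
Qed.

Section DerivableOn.
Variable R : numFieldType.
Implicit Types (f g : R -> R) (U : set R).

Definition derivable_n_on U n f :=
  forall k, (k < n)%N -> forall t, U t -> derivable (derive1n k f) t 1.

Lemma derivable_n_onW U m n f :
  (m <= n)%N -> derivable_n_on U n f -> derivable_n_on U m f.
Proof. by move=> mn df k km; apply: df; exact: leq_trans km mn. Qed.

Lemma derivable_n_on_sub U V n f :
  (U `<=` V)%classic -> derivable_n_on V n f -> derivable_n_on U n f.
Proof. by move=> UV df k kn t /UV; exact: df. Qed.

Lemma derive1n_eq_on U f g : open U -> (forall t, U t -> f t = g t) ->
  forall k t, U t -> derive1n k f t = derive1n k g t.
Proof.
move=> oU fg; elim=> [|k IHk] t Ut; first exact: fg.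
rewrite !derive1nS !derive1E; apply: near_eq_derive.
by apply: filterS (open_nbhs_nbhs (conj oU Ut)) => s /IHk.
Qed.

Lemma derive1nM_on U f g m : open U ->
  derivable_n_on U m f -> derivable_n_on U m g ->
  forall t, U t -> derive1n m (fun s => f s * g s) t =
    \sum_(j < m.+1) 'C(m, j)%:R * (derive1n j f t * derive1n (m - j) g t).
Proof.
move=> oU; elim: m => [|m IHm] df dg t Ut; first by rewrite big_ord1 mul1r.
have {}IHm := IHm (derivable_n_onW (leqnSn m) df) (derivable_n_onW (leqnSn m) dg).
pose H := \sum_(j < m.+1) 'C(m, j)%:R *: (derive1n j f * derive1n (m - j) g).
have df' (j : 'I_m.+1) : derivable (derive1n j f) t 1 := df j (ltn_ord j) t Ut.
have dg' (j : 'I_m.+1) : derivable (derive1n (m - j) g) t 1.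
  by apply: dg => //; rewrite ltnS leq_subr.
rewrite derive1nS derive1E (@near_eq_derive _ _ _ _ H); last first.
  apply: filterS (open_nbhs_nbhs (conj oU Ut)) => s Us.
  by rewrite IHm // /H fct_sumE; apply: eq_bigr.
rewrite /H derive_sum => [|j]; last exact/derivableZ/derivableM.
rewrite -(binomial_conv_pascal (fun j => derive1n j f t) (fun j => derive1n j g t)).
apply: eq_bigr => j _.
by rewrite deriveZ ?deriveM -?derive1E //; exact/derivableM.
Qed.

Lemma derivable_n_on_div U n f g : open U -> (forall t, U t -> g t != 0) ->
  derivable_n_on U n f -> derivable_n_on U n g ->
  derivable_n_on U n (fun t => f t / g t).
Proof.
move=> oU g_neq0 df dg; set q := fun t => f t / g t.
have qgE s : U s -> q s * g s = f s by move=> Us; rewrite /q divfK ?g_neq0.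
suff dq k : (k <= n)%N -> derivable_n_on U k q by exact: dq.
elim: k => [_ ? //|k IHk] kn.
have dqk := IHk (ltnW kn); have dgk := derivable_n_onW (ltnW kn) dg.
move=> j; rewrite ltnS leq_eqVlt => /orP[/eqP -> t Ut|]; last exact: dqk.
(* On U, Leibniz's rule for q * g = f gives q^(k) through f^(k), g and lower derivatives
   of q. *)
pose E := (derive1n k f - \sum_(j < k) 'C(k, j)%:R *: (derive1n j q * derive1n (k - j) g)) *
  (fun s => (g s)^-1).
apply: (@near_eq_derivable _ _ _ E).
  apply: filterS (open_nbhs_nbhs (conj oU Ut)) => s Us.
  rewrite /E !fctE /= fct_sumE.
  have := derive1nM_on oU dqk dgk Us.
  rewrite (derive1n_eq_on oU qgE) // big_ord_recr /= subnn binn mul1r => ->.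
  under [X in _ - X]eq_bigr do rewrite !fctE.
  by rewrite addrAC subrr add0r mulfK ?g_neq0.
have n_gt0 : (0 < n)%N := leq_ltn_trans (leq0n k) kn.
apply: derivableM; last exact: derivableV (g_neq0 _ Ut) (dg 0%N n_gt0 t Ut).
apply: derivableB; first exact: df.
apply: derivable_sum => i; apply/derivableZ/derivableM.
  exact: dqk (ltn_ord i) t Ut.
by apply: dg => //; rewrite (leq_ltn_trans (leq_subr _ _) kn).
Qed.

End DerivableOn.

Lemma derive1n_div_leibniz (R : realType) (u v : R -> R) n x m :
  derivable_n_on setT n u -> derivable_n_on setT n v -> v x != 0 -> (m <= n)%N ->
  derive1n m u x = \sum_(j < m.+1)
    'C(m, j)%:R * (derive1n j (fun t => u t / v t) x * derive1n (m - j) v x).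
Proof.
(* For n = 0 the set where v does not vanish need not be open, but then m = 0. *)
move=> du dv vx; case: n du dv => [|n] du dv mn.
  by move: mn; rewrite leqn0 => /eqP ->; rewrite big_ord1 mul1r /= divfK.
pose U := [set t | v t != 0]%classic.
have oU : open U.
  apply: (@open_comp _ _ v [set y | y != 0]%classic); last exact: open_neq.
  by move=> t _; apply/differentiable_continuous/derivable1_diffP; exact: (dv 0%N isT t I).
have duU := derivable_n_on_sub (subsetT U) du.
have dvU := derivable_n_on_sub (subsetT U) dv.
rewrite -(derive1n_eq_on (f := fun t => u t / v t * v t) oU) // => [|t vt];
  last by rewrite divfK.
apply: (derive1nM_on oU) => //; apply: derivable_n_onW mn _ => //.
exact: derivable_n_on_div.
Qed.

Theorem theorem3p1 (R : realType) (n : nat) (u v : R -> R)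
  (hu : forall k, (k < n)%N -> forall t, derivable (derive1n k u) t 1)
  (hv : forall k, (k < n)%N -> forall t, derivable (derive1n k v) t 1)
  (x : R) (hx : v x != 0) :
  derive1n n (fun t => u t / v t) x =
  (n`!)%:R * \sum_(l < n.+1)
     (derive1n (n - l) u x / ((n - l)`!)%:R *
      \sum_(y in partitions_of l)
        (multinom R (\sum_(i < l) (y i : nat))%N (fun i => (y i : nat)) *
         (-1) ^+ (\sum_(i < l) (y i : nat))%N
         / v x ^+ (\sum_(i < l) (y i : nat)).+1 *
         \prod_(i < l) (derive1n i.+1 v x / ((i.+1)`!)%:R) ^+ (y i : nat))).
Proof.
set q := fun t => u t / v t.
pose taylor (f : R -> R) i := derive1n i f x / (i`!)%:R.
have taylor_v0 : taylor v 0%N = v x by rewrite /taylor divr1.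
have conv_qv m : (m <= n)%N ->
    \sum_(j < m.+1) taylor q j * taylor v (m - j)%N = taylor u m.
  move=> mn; rewrite /taylor (derive1n_div_leibniz _ _ hx mn).
  - by rewrite (binomial_conv_taylor (fun j => derive1n j q x) (fun j => derive1n j v x)).
  - by move=> k kn t _; exact: hu.
  - by move=> k kn t _; exact: hv.
have conv_recip m : (m <= n)%N ->
    \sum_(j < m.+1) recip_coef (taylor v) (taylor v 0%N) j * taylor v (m - j)%N = (m == 0)%:R.
  by move=> _; apply: recip_coef_conv; rewrite taylor_v0.
have -> : derive1n n q x = (n`!)%:R * taylor q n.
  by rewrite /taylor mulrC divfK ?natr_fact_neq0.
by rewrite (conv_inverse_solve conv_qv conv_recip) taylor_v0.
Qed.
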